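(* Let $p\in[1,\infty)$, $w$ a weight sequence, and let $A\subset L_{p,w}$ be bounded in $\|\cdot\|_{p,w}$ and equinormed with respect to $\{\|\cdot\|_{p,w,i}\}_{i\in\mathbb{N}}$. Then $$\forall\varepsilon>0\ \exists N\in\mathbb{N}\ \forall a\in A\ \forall i\ge N:\ \sum_{j=i+1}^\infty|a_{\sigma^a_j}|^p w_j<\varepsilon.$$
   Context: A weight sequence is a sequence $w=(w_i)$ of positive reals with $w_1=1\ge w_2\ge\dots$, $w_i\to0$, and $\sum_i w_i=+\infty$. For a real sequence $a$, $\|a\|_{p,w}=\sup_{\sigma}\big(\sum_{i=1}^\infty |a_{\sigma_i}|^p w_i\big)^{1/p}$ over all permutations $\sigma$ of $\mathbb{N}$; $L_{p,w}$ is the set of real sequences with finite norm. $\|a\|_{p,w,i}=\|(a_1,\dots,a_i,0,0,\dots)\|_{p,w}$. $A$ is equinormed if $\forall\varepsilon>0\ \exists i\ \forall a\in A:\ \|a\|_{p,w}\le\|a\|_{p,w,i}+\varepsilon$. For $a\in L_{p,w}$, $\sigma^a:\mathbb{N}\to\mathbb{N}$ is defined recursively: $\sigma^a_i$ is the element $j$ of $\mathbb{N}\setminus\{\sigma^a_1,\dots,\sigma^a_{i-1}\}$ with $|a_j|$ maximal, taking the smallest such index in case of ties (well defined for $a\in L_{p,w}$; $|a_{\sigma^a_i}|$ is nonincreasing). *)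

(* Sequences are indexed from 0: a 0 = a_1 in the paper. *)
From HB Require Import structures.
From mathcomp Require Import all_boot all_order all_algebra.
From mathcomp Require Import all_classical all_reals all_analysis.
Set Implicit Arguments. Unset Strict Implicit. Unset Printing Implicit Defensive.
Import Order.TTheory GRing.Theory Num.Theory.
Import numFieldNormedType.Exports.
Local Open Scope classical_set_scope.
Local Open Scope ring_scope.

Section Defs.
Variable R : realType.

Definition weight_seq (w : R^nat) : Prop :=
  w 0%N = 1 /\ (forall i, 0 < w i) /\ (forall i, w i.+1 <= w i) /\
  (w @ \oo --> (0 : R)) /\ ((\sum_(0 <= i <oo) (w i)%:E) = +oo)%E.

Definition perm_sum (p : R) (w a : R^nat) (sigma : nat -> nat) : \bar R :=
  (\sum_(0 <= i <oo) ((`|a (sigma i)| `^ p) * w i)%:E)%E.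

Definition lpw_norm (p : R) (w a : R^nat) : \bar R :=
  ((ereal_sup [set perm_sum p w a sigma | sigma in [set s : nat -> nat | bijective s]])
    `^ (p^-1))%E.

Definition Lpw (p : R) (w : R^nat) : set (R^nat) :=
  [set a | (lpw_norm p w a < +oo)%E].

Definition lpw_norm_trunc (p : R) (w a : R^nat) (i : nat) : \bar R :=
  lpw_norm p w (fun j => if (j < i)%N then a j else 0).

Definition equinormed (p : R) (w : R^nat) (A : set (R^nat)) : Prop :=
  forall eps : R, 0 < eps -> exists i : nat, forall a, A a ->
    (lpw_norm p w a <= lpw_norm_trunc p w a i + eps%:E)%E.

Definition greedy_next_spec (a : R^nat) (used : seq nat) (j : nat) : Prop :=
  j \notin used /\
  (forall k, k \notin used -> `|a k| <= `|a j|) /\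
  (forall k, k \notin used -> `|a k| = `|a j| -> (j <= k)%N).

Definition greedy_next (a : R^nat) (used : seq nat) : nat :=
  xget 0%N (greedy_next_spec a used).

Fixpoint greedy_prefix (a : R^nat) (n : nat) : seq nat :=
  match n with
  | 0 => [::]
  | n.+1 => rcons (greedy_prefix a n) (greedy_next a (greedy_prefix a n))
  end.

(* sigma^a (0-indexed: sigma_of a i = sigma^a_{i+1}) *)
Definition sigma_of (a : R^nat) (i : nat) : nat := greedy_next a (greedy_prefix a i).

End Defs.

From HB Require Import structures.
From mathcomp Require Import all_boot all_order all_algebra.
From mathcomp Require Import all_classical all_reals all_analysis.
From mathcomp Require Import ring lra.
Import Order.TTheory GRing.Theory Num.Theory.
Import numFieldNormedType.Exports.
Local Open Scope classical_set_scope.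
Local Open Scope ring_scope.
Set Implicit Arguments. Unset Strict Implicit.

(* Entries of a sequence of finite (p,w)-norm tend to 0, so the greedy rearrangement sigma^a is
   well defined.  Since the weights are nonincreasing, Abel summation and the fact that the
   greedy prefix of length n maximises the sum of |a_j|^p over n distinct indices show that
   every permuted sum of the truncation (a_1, ..., a_N, 0, ...) is at most the greedy partial
   sum G_N, while the whole greedy series is at most ||a||^p.  Equinormedness gives
   ||a|| <= ||a||_N + d uniformly on A, which, as ||a|| <= M on A, convexity of t |-> t^p turns
   into ||a||^p <= ||a||_N^p + d (M + 1)^p.  Hence every greedy tail from N is at most
   d (M + 1)^p, uniformly in a in A. *)

Lemma bijective_extend_uniq (L : seq nat) : uniq L ->
  exists2 s : nat -> nat, bijective s & forall i, (i < size L)%N -> s i = nth 0%N L i.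
Proof.
move=> uL; pose m := (\max_(x <- L) x).+1.
have Lm x : x \in L -> (x < m)%N by move=> xL; rewrite ltnS (leq_bigmax_seq x xL).
pose Q := L ++ [seq x <- iota 0 m | x \notin L].
have uQ : uniq Q.
  rewrite /Q cat_uniq uL filter_uniq ?iota_uniq // andbT.
  by apply/hasPn => x; rewrite seq.mem_filter => /andP[].
have memQ x : (x \in Q) = (x < m)%N.
  rewrite /Q mem_cat seq.mem_filter mem_iota add0n.
  by case xL: (x \in L) => //=; rewrite Lm.
have sQ : size Q = m.
  rewrite -(size_iota 0 m); apply: perm_size; apply: uniq_perm; rewrite ?iota_uniq //.
  by move=> x; rewrite memQ mem_iota.
exists (fun i => if (i < m)%N then nth 0%N Q i else i).
  exists (fun j => if (j < m)%N then index j Q else j) => [i|j] /=.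
    case: (ltnP i m) => im; last by rewrite ltnNge im.
    by rewrite -memQ mem_nth ?sQ // index_uniq ?sQ.
  case: (ltnP j m) => jm; last by rewrite ltnNge jm.
  by rewrite -sQ index_mem memQ jm nth_index ?memQ.
move=> i iL; have im : (i < m)%N by rewrite -sQ size_cat ltn_addr.
by rewrite im /Q nth_cat iL.
Qed.

Lemma ler_sum_nonincreasing_weights (R : numDomainType) (B : nat) (c d v : nat -> R) :
  (forall k l, (k <= l < B)%N -> v l <= v k) -> (forall k, (k < B)%N -> 0 <= v k) ->
  (forall m, (m < B)%N -> \sum_(0 <= k < m.+1) c k <= \sum_(0 <= k < m.+1) d k) ->
  \sum_(0 <= k < B) c k * v k <= \sum_(0 <= k < B) d k * v k.
Proof.
move=> vmono v0 cd; rewrite -subr_ge0 -sumrB.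
under eq_bigr do rewrite -mulrBl.
have : forall m, (m < B)%N -> 0 <= \sum_(0 <= k < m.+1) (d k - c k).
  by move=> m mB; rewrite sumrB subr_ge0 cd.
elim: B v vmono v0 {cd} => [|B IH] v vmono v0 e0; first by rewrite big_geq.
(* Abel summation: peel off the constant weight [v B]. *)
have -> : \sum_(0 <= k < B.+1) (d k - c k) * v k =
   \sum_(0 <= k < B) (d k - c k) * (v k - v B) + v B * \sum_(0 <= k < B.+1) (d k - c k).
  rewrite !big_nat_recr //= mulrDr addrA [v B * (d B - c B)]mulrC; congr (_ + _).
  rewrite big_distrr -big_split /=; apply: eq_bigr => k _.
  by rewrite mulrBr [v B * _]mulrC subrK.
apply: addr_ge0; last by rewrite mulr_ge0 ?v0 ?e0.
apply: IH => [k l /andP[kl lB]|k kB|m mB]; last exact/e0/ltnW.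
  by rewrite lerD2r vmono // kl ltnS (ltnW lB).
by rewrite subr_ge0 vmono // (ltnW kB) /=.
Qed.

Lemma notin_gt_max (U : seq nat) k : (\max_(x <- U) x < k)%N -> k \notin U.
Proof.
move=> Uk; apply/negP => /(@leq_bigmax_seq _ U xpredT (fun x => x) k) /(_ isT).
by rewrite leqNgt Uk.
Qed.

Definition greedy_defined (R : realType) (a : R^nat) :=
  forall U, exists j, greedy_next_spec a U j.

Lemma greedy_prefixE (R : realType) (a : R^nat) n :
  greedy_prefix a n = map (sigma_of a) (iota 0 n).
Proof.
elim: n => // n IH.
by rewrite -[in RHS]addn1 iotaD map_cat -IH /= cats1.
Qed.

Lemma size_greedy_prefix (R : realType) (a : R^nat) n : size (greedy_prefix a n) = n.
Proof. by rewrite greedy_prefixE size_map size_iota. Qed.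

Section Greedy.
Variables (R : realType) (a : R^nat).
Hypothesis a_greedy : greedy_defined a.

Lemma sigma_ofP n : greedy_next_spec a (greedy_prefix a n) (sigma_of a n).
Proof. exact: xgetPex. Qed.

Lemma sigma_of_notin n : sigma_of a n \notin greedy_prefix a n.
Proof. by case: (sigma_ofP n). Qed.

Lemma greedy_prefix_uniq n : uniq (greedy_prefix a n).
Proof. by elim: n => //= n IH; rewrite rcons_uniq IH sigma_of_notin. Qed.

Lemma le_sigma_of k n t : k \notin greedy_prefix a n -> (t < n)%N ->
  `|a k| <= `|a (sigma_of a t)|.
Proof.
move=> kn tn; have [_ [+ _]] := sigma_ofP t; apply.
apply: contra kn; rewrite !greedy_prefixE => /mapP[u]; rewrite !mem_iota /= => ut ->.
by apply: map_f; rewrite mem_iota (ltn_trans ut tn).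
Qed.

Lemma sigma_of_nonincreasing m n : (m <= n)%N ->
  `|a (sigma_of a n)| <= `|a (sigma_of a m)|.
Proof.
rewrite leq_eqVlt => /orP[/eqP -> //|mn].
exact: le_sigma_of (sigma_of_notin n) mn.
Qed.

End Greedy.

Lemma count_notin_sym (s t : seq nat) : uniq s -> uniq t -> size s = size t ->
  count [predC t] s = count [predC s] t.
Proof.
move=> us ut st.
have common : count (mem t) s = count (mem s) t.
  rewrite -!size_filter; apply/perm_size/uniq_perm; rewrite ?filter_uniq //.
  by move=> x; rewrite !seq.mem_filter andbC.
by apply/eqP; rewrite -(eqn_add2l (count (mem t) s)) count_predC common count_predC st.
Qed.

Lemma sum_powR_le_greedy_prefix (R : realType) (p : R) (a : R^nat) (J : seq nat) :
  greedy_defined a -> 0 <= p -> uniq J ->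
  \sum_(j <- J) `|a j| `^ p <= \sum_(0 <= t < size J) `|a (sigma_of a t)| `^ p.
Proof.
move=> ga p0 uJ; set g := fun j => `|a j| `^ p.
have g_mono x y : `|a x| <= `|a y| -> g x <= g y.
  by move=> xy; apply: ge0_ler_powR; rewrite ?nnegrE.
case sJ : (size J) => [|r]; first by move/size0nil: sJ => ->; rewrite big_nil big_geq.
change (\sum_(j <- J) g j <= \sum_(0 <= t < r.+1) g (sigma_of a t)).
set P := greedy_prefix a r.+1.
have uP : uniq P := greedy_prefix_uniq ga _.
have -> : \sum_(0 <= t < r.+1) g (sigma_of a t) = \sum_(x <- P) g x.
  by rewrite /P greedy_prefixE big_map /index_iota subn0.
rewrite (bigID (mem P)) [X in _ <= X](bigID (mem J)) /=.
have -> : \sum_(j <- J | j \in P) g j = \sum_(j <- P | j \in J) g j.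
  rewrite -[LHS]big_filter -[RHS]big_filter; apply/perm_big/uniq_perm; try exact: filter_uniq.
  by move=> x; rewrite !seq.mem_filter andbC.
rewrite lerD2l.
(* Both remainders have the same number of terms, separated by [g (sigma_of a r)]. *)
apply: (@le_trans _ _ (\sum_(j <- J | j \notin P) g (sigma_of a r))).
  by apply: ler_sum => j jP; apply/g_mono/(le_sigma_of ga jP).
rewrite big_const_seq count_notin_sym ?size_greedy_prefix // -big_const_seq.
rewrite [X in X <= _]big_seq_cond [X in _ <= X]big_seq_cond; apply: ler_sum => x /andP[+ _].
rewrite /P greedy_prefixE => /mapP[t]; rewrite mem_iota => /andP[_ tr] ->.
exact/g_mono/sigma_of_nonincreasing.
Qed.

Lemma greedy_defined_small_entries (R : realType) (a : R^nat) :
  (forall c, 0 < c -> exists B, forall k, (B <= k)%N -> `|a k| < c) -> greedy_defined a.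
Proof.
move=> small U.
have [j jU jmax] : exists2 j, j \notin U & forall k, k \notin U -> `|a k| <= `|a j|.
  have [[k kU ak]|all0] := pselect (exists2 k, k \notin U & a k != 0).
    have [B HB] : exists B, forall k', (B <= k')%N -> `|a k'| < `|a k|.
      by apply: small; rewrite normr_gt0.
    have kB : (k < B)%N by rewrite ltnNge; apply/negP => /HB; rewrite ltxx.
    have [j jU jmax] :=
      @arg_maxP _ _ 'I_B (Ordinal kB) [pred i : 'I_B | val i \notin U] (fun i => `|a i|) kU.
    exists (val j) => // k' k'U; have [k'B|Bk'] := ltnP k' B; first exact: (jmax (Ordinal k'B)).
    exact/ltW/(lt_le_trans (HB _ Bk'))/(jmax (Ordinal kB)).
  exists (\max_(x <- U) x).+1; first exact: notin_gt_max.
  move=> k kU; case: (eqVneq (a k) 0) => [->|ak]; first by rewrite normr0.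
  by case: all0; exists k.
have exP : exists m, (m \notin U) && (`|a m| == `|a j|) by exists j; rewrite jU eqxx.
have [m /andP[mU /eqP mj] mmin] := ex_minnP exP.
exists m; split => //; split => [k kU|k kU e]; first by rewrite mj jmax.
by apply: mmin; rewrite kU e mj eqxx.
Qed.

Definition perm_sum_sup (R : realType) (p : R) (w a : R^nat) : \bar R :=
  ereal_sup [set perm_sum p w a sigma | sigma in [set s : nat -> nat | bijective s]].

Lemma lpw_normE (R : realType) (p : R) (w a : R^nat) :
  lpw_norm p w a = (perm_sum_sup p w a `^ p^-1)%E.
Proof. by []. Qed.

Section PermSums.
Variables (R : realType) (p : R) (w : R^nat).
Hypothesis w_ge0 : forall i, 0 <= w i.

Lemma sum_le_perm_sum_sup (a : R^nat) (L : seq nat) : uniq L ->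
  ((\sum_(0 <= i < size L) `|a (nth 0%N L i)| `^ p * w i)%:E <= perm_sum_sup p w a)%E.
Proof.
case/bijective_extend_uniq => s s_bij sL.
apply: (@le_trans _ _ (perm_sum p w a s)); last by apply: ereal_sup_ubound; exists s.
have -> : (\sum_(0 <= i < size L) `|a (nth 0%N L i)| `^ p * w i)%:E =
    \sum_(0 <= i < size L) (`|a (s i)| `^ p * w i)%:E.
  by rewrite -sumEFin; apply: eq_big_nat => i /andP[_ iL]; rewrite sL.
by apply: nneseries_lim_ge => i _ _; rewrite lee_fin mulr_ge0 ?powR_ge0.
Qed.

Lemma perm_sum_sup_ge0 (a : R^nat) : (0 <= perm_sum_sup p w a)%E.
Proof. by have := @sum_le_perm_sum_sup a [::] isT; rewrite big_geq. Qed.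

Lemma greedy_series_le_perm_sum_sup (a : R^nat) : greedy_defined a ->
  (\sum_(0 <= j <oo) ((`|a (sigma_of a j)| `^ p) * w j)%:E <= perm_sum_sup p w a)%E.
Proof.
move=> ga; apply: lime_le.
  by apply: is_cvg_nneseries => j _ _; rewrite lee_fin mulr_ge0 ?powR_ge0.
apply: nearW => n; apply: le_trans (sum_le_perm_sum_sup a (greedy_prefix_uniq ga n)).
rewrite size_greedy_prefix sumEFin lee_fin; apply: ler_sum_nat => t /andP[_ tn].
by rewrite greedy_prefixE (nth_map 0%N) ?size_iota // nth_iota.
Qed.

Lemma divergent_partial_sums_unbounded : (\sum_(0 <= i <oo) (w i)%:E = +oo)%E ->
  forall M, exists n, M < \sum_(0 <= i < n) w i.
Proof.
move=> winf M; apply: contrapT => nH.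
have : (\sum_(0 <= i <oo) (w i)%:E <= M%:E)%E.
  apply: lime_le; first by apply: is_cvg_nneseries => n _ _; rewrite lee_fin.
  apply: nearW => n; rewrite sumEFin lee_fin leNgt; apply/negP => Mn; apply: nH.
  by exists n.
by rewrite winf leNgt ltry.
Qed.

Lemma small_entries_of_finite_sup (a : R^nat) : 0 < p ->
  (\sum_(0 <= i <oo) (w i)%:E = +oo)%E -> (perm_sum_sup p w a < +oo)%E ->
  forall c, 0 < c -> exists B, forall k, (B <= k)%N -> `|a k| < c.
Proof.
move=> p0 winf afin c c0; apply: contrapT => nH.
have big_after B : exists2 k, (B <= k)%N & c <= `|a k|.
  apply: contrapT => nk; apply: nH; exists B => k kB; rewrite ltNge; apply/negP => ck.
  by apply: nk; exists k.
have big_lists n : exists L, [/\ uniq L, size L = n & {in L, forall x, c <= `|a x|}].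
  elim: n => [|n [L [uL sL cL]]]; first by exists [::].
  have [k kL ck] := big_after (\max_(x <- L) x).+1.
  exists (k :: L); split => /=; [|by rewrite sL|].
  - by rewrite uL andbT notin_gt_max.
  - by move=> x; rewrite in_cons => /orP[/eqP -> //|]; exact: cL.
have sup_fin : perm_sum_sup p w a \is a fin_num.
  by rewrite ge0_fin_numE ?perm_sum_sup_ge0.
have [n Hn] := divergent_partial_sums_unbounded winf (fine (perm_sum_sup p w a) / c `^ p).
have [L [uL sL cL]] := big_lists n.
have := sum_le_perm_sum_sup a uL; rewrite -(fineK sup_fin) lee_fin sL leNgt => /negP; apply.
rewrite ltr_pdivrMr ?powR_gt0 // in Hn; apply: lt_le_trans Hn _.
rewrite big_distrl /=; apply: ler_sum_nat => i /andP[_ iL].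
rewrite mulrC ler_wpM2r // ge0_ler_powR ?nnegrE ?(ltW p0) ?(ltW c0) //.
by apply/cL/mem_nth; rewrite sL.
Qed.

Lemma Lpw_greedy_defined (a : R^nat) : 0 < p -> (\sum_(0 <= i <oo) (w i)%:E = +oo)%E ->
  Lpw p w a -> greedy_defined a.
Proof.
move=> p0 winf a_fin; apply/greedy_defined_small_entries/small_entries_of_finite_sup => //.
move: a_fin; rewrite /Lpw /= lpw_normE; case: (perm_sum_sup p w a) => //= [r _|]; first exact: ltry.
by rewrite invr_eq0 gt_eqF.
Qed.

End PermSums.

Definition trunc_seq (R : realType) (a : R^nat) (i : nat) : R^nat :=
  fun j => if (j < i)%N then a j else 0.

Section Truncation.
Variables (R : realType) (p : R) (w a : R^nat).
Hypotheses (p_gt0 : 0 < p) (w_ge0 : forall i, 0 <= w i) (w_noninc : nonincreasing_seq w).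
Hypothesis a_greedy : greedy_defined a.

Let greedy_trunc i k := if (k < i)%N then `|a (sigma_of a k)| `^ p else 0.

Lemma perm_sum_eq_finite (b : R^nat) (tau : nat -> nat) B :
  (forall k, (B <= k)%N -> b (tau k) = 0) ->
  perm_sum p w b tau = (\sum_(0 <= k < B) `|b (tau k)| `^ p * w k)%:E.
Proof.
move=> b0; rewrite /perm_sum (@nneseries_split _ _ 0 B); last first.
  by move=> k _; rewrite lee_fin mulr_ge0 ?powR_ge0.
rewrite add0n eseries0 ?adde0 ?sumEFin // => k Bk _.
by rewrite b0 // normr0 powR0 ?gt_eqF // mul0r.
Qed.

Lemma sum_trunc_le_greedy (tau : nat -> nat) i m : injective tau ->
  \sum_(0 <= k < m) `|trunc_seq a i (tau k)| `^ p <= \sum_(0 <= k < m) greedy_trunc i k.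
Proof.
move=> tau_inj; set J := [seq j <- map tau (iota 0 m) | (j < i)%N].
have -> : \sum_(0 <= k < m) `|trunc_seq a i (tau k)| `^ p = \sum_(j <- J) `|a j| `^ p.
  rewrite big_filter big_map [RHS]big_mkcond /index_iota subn0; apply: eq_bigr => k _.
  by rewrite /trunc_seq; case: ifP => // _; rewrite normr0 powR0 ?gt_eqF.
have uJ : uniq J by rewrite filter_uniq // map_inj_uniq ?iota_uniq.
apply: le_trans (sum_powR_le_greedy_prefix a_greedy (ltW p_gt0) uJ) _.
have Jm : (size J <= m)%N by rewrite size_filter (leq_trans (count_size _ _)) ?size_map ?size_iota.
have Ji : (size J <= i)%N.
  rewrite -(size_iota 0 i); apply: uniq_leq_size => // j.
  by rewrite seq.mem_filter mem_iota => /andP[ji _].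
rewrite (@big_cat_nat _ _ _ (size J) 0 m) //= -[X in X <= _]addr0 lerD //.
  by apply: ler_sum_nat => t /andP[_ tJ]; rewrite /greedy_trunc (leq_trans tJ Ji).
by apply: sumr_ge0 => t _; rewrite /greedy_trunc; case: ifP => // _; exact: powR_ge0.
Qed.

Lemma perm_sum_trunc_le (tau : nat -> nat) i : bijective tau ->
  (perm_sum p w (trunc_seq a i) tau <=
   (\sum_(0 <= t < i) `|a (sigma_of a t)| `^ p * w t)%:E)%E.
Proof.
case=> tau' tauK tau'K.
pose B := maxn i (\max_(j <- iota 0 i) tau' j).+1.
have iB : (i <= B)%N by rewrite leq_maxl.
have tauB k : (tau k < i)%N -> (k < B)%N.
  move=> ki; rewrite leq_max; apply/orP; right; rewrite ltnS -{1}[k]tauK.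
  by apply: leq_bigmax_seq; rewrite ?mem_iota.
rewrite (@perm_sum_eq_finite _ _ B) => [|k Bk]; last first.
  by rewrite /trunc_seq; case: ifP => // /tauB; rewrite ltnNge Bk.
have -> : \sum_(0 <= t < i) `|a (sigma_of a t)| `^ p * w t =
    \sum_(0 <= k < B) greedy_trunc i k * w k.
  rewrite (@big_cat_nat _ _ _ i 0 B) //= [X in _ = _ + X]big1_seq => [|k].
    by rewrite addr0; apply: eq_big_nat => k /andP[_ ki]; rewrite /greedy_trunc ki.
  by rewrite mem_index_iota /greedy_trunc => /andP[_ /andP[ik _]]; rewrite ltnNge ik mul0r.
rewrite lee_fin; apply: ler_sum_nonincreasing_weights => [k l /andP[kl _]|k _|m _].
- exact: w_noninc.
- exact: w_ge0.
- exact/sum_trunc_le_greedy/(can_inj tauK).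
Qed.

Lemma perm_sum_sup_trunc_le i :
  (perm_sum_sup p w (trunc_seq a i) <=
   (\sum_(0 <= t < i) `|a (sigma_of a t)| `^ p * w t)%:E)%E.
Proof. by apply: ge_ereal_sup => _ [tau tau_bij <-]; exact: perm_sum_trunc_le. Qed.

Lemma greedy_tail_le N i (delta : R) : (N <= i)%N ->
  (perm_sum_sup p w a <= perm_sum_sup p w (trunc_seq a N) + delta%:E)%E ->
  (\sum_(i <= j <oo) (`|a (sigma_of a j)| `^ p * w j)%:E <= delta%:E)%E.
Proof.
move=> Ni le_trunc; set f := fun j => (`|a (sigma_of a j)| `^ p * w j)%:E.
have f_ge0 j : (0 <= f j)%E by rewrite lee_fin mulr_ge0 ?powR_ge0.
have tail_mono : (\sum_(i <= j <oo) f j <= \sum_(N <= j <oo) f j)%E.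
  rewrite (@nneseries_split _ _ N (i - N)) // subnKC // leeDr //.
  by apply: sume_ge0 => k _.
apply: le_trans tail_mono _.
have := greedy_series_le_perm_sum_sup p w_ge0 a_greedy.
rewrite (@nneseries_split _ _ 0 N) => [/le_trans/(_ le_trunc)|k _]; last exact: f_ge0.
move/le_trans/(_ (leeD2r _ (perm_sum_sup_trunc_le N))).
by rewrite sumEFin leeD2lE.
Qed.

End Truncation.

Lemma powR_leD_bounded (R : realType) (p x y K e : R) : 1 <= p -> 0 <= e -> 0 <= y ->
  0 <= x -> x <= K -> x <= y + e -> x `^ p <= y `^ p + e * (K + 1) `^ p.
Proof.
move=> p1 e0 y0 x0 xK xye; have p0 : 0 <= p by exact: le_trans ler01 p1.
have [yx|xy] := leP x y.
  by apply: le_trans (ge0_ler_powR p0 _ _ yx) _; rewrite ?nnegrE // lerDl mulr_ge0 ?powR_ge0.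
(* Write x as a convex combination of y and L := K + 1 with weight at most e on L. *)
set L := K + 1; have L0 : 0 <= L by rewrite /L; lra.
have Ly : 1 <= L - y by rewrite /L; lra.
set l := (x - y) / (L - y).
have l0 : 0 <= l by apply: divr_ge0; lra.
have l1 : l <= 1 by rewrite ler_pdivrMr ?mul1r /L; lra.
have le : l <= e by rewrite ler_pdivrMr; nra.
have xE : x = l * L + (1 - l) * y by rewrite /l; field; rewrite gt_eqF //; lra.
have := @convex_powR R p p1 (Itv01 l0 l1) L y.
rewrite !inE /= !in_itv /= !andbT => /(_ L0 y0); rewrite !convRE /= => xconv.
rewrite {1}xE; apply: le_trans xconv _; rewrite addrC lerD ?ler_wpM2r ?powR_ge0 //.
by rewrite ler_piMl ?powR_ge0 // unstable.onem_le1.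
Qed.

Lemma poweRV_leD_bounded (R : realType) (p K d : R) (S T : \bar R) :
  1 <= p -> 0 <= d -> (0 <= S)%E -> (0 <= T)%E ->
  (S `^ p^-1 <= K%:E)%E -> (S `^ p^-1 <= T `^ p^-1 + d%:E)%E ->
  (S <= T + (d * (K + 1) `^ p)%:E)%E.
Proof.
move=> p1 d0; have p0 : 0 < p by exact: lt_le_trans ltr01 p1.
move: S T => [s| |] [t| |] // s0 t0; rewrite ?addye ?leey //.
  rewrite !poweR_EFin -EFinD !lee_fin => sK sle.
  have := powR_leD_bounded p1 d0 (powR_ge0 t _) (powR_ge0 s _) sK sle.
  by rewrite -!powRrM mulVf ?gt_eqF // !powRr1.
by rewrite /= invr_eq0 gt_eqF.
Qed.

Theorem mainTheorem12 (R : realType) (p : R) (w : R^nat) (A : set (R^nat)) :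
  1 <= p -> weight_seq w -> A `<=` Lpw p w ->
  (exists M : R, forall a, A a -> (lpw_norm p w a <= M%:E)%E) ->
  equinormed p w A ->
  forall eps : R, 0 < eps -> exists N : nat, forall a, A a -> forall i : nat, (N <= i)%N ->
    (\sum_(i <= j <oo) ((`|a (sigma_of a j)| `^ p) * w j)%:E < eps%:E)%E.
Proof.
move=> p1 [_ [w_gt0 [/nonincreasing_seqP w_noninc [_ w_div]]]] A_Lpw [M A_bdd] A_equi eps eps0.
have p0 : 0 < p by exact: lt_le_trans ltr01 p1.
have w_ge0 i : 0 <= w i by exact: ltW.
pose K := Num.max M 0; have K0 : 0 <= K by rewrite le_max lexx orbT.
have Kp : 0 < (K + 1) `^ p by rewrite powR_gt0 // ltr_wpDl.
pose d := eps / (2 * (K + 1) `^ p); have d0 : 0 < d by rewrite divr_gt0 ?mulr_gt0.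
have [N HN] := A_equi d d0; exists N => a Aa i Ni.
have a_greedy := Lpw_greedy_defined w_ge0 p0 w_div (A_Lpw a Aa).
apply: (@le_lt_trans _ _ (d * (K + 1) `^ p)%:E).
  apply: (greedy_tail_le p0 w_ge0 w_noninc a_greedy Ni).
  apply: poweRV_leD_bounded (HN a Aa); rewrite ?perm_sum_sup_ge0 ?(ltW d0) //.
  by apply: le_trans (A_bdd a Aa) _; rewrite lee_fin le_max lexx.
have dK : d * (K + 1) `^ p = eps / 2 by rewrite /d; field; rewrite gt_eqF.
by rewrite lte_fin dK; lra.
Qed.
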